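(* Fix an integer $n\ge 1$, real numbers $c_1<c_2<\cdots<c_n$ and a real number $\epsilon$. On $\mathbb{R}^3$ with coordinates $(x,y,z)$ put $\rho=\sqrt{x^2+y^2}$, $r_j=\sqrt{x^2+y^2+(z-c_j)^2}$ and $$V_\epsilon=\frac{\epsilon}{2}+\frac12\sum_{j=1}^n\frac{1}{r_j},\qquad \alpha=-\frac12\sum_{j=1}^n\frac{x\,dy-y\,dx}{r_j\,(r_j-z+c_j)},$$ defined on $U=\mathbb{R}^3\setminus\{(0,0,z): z\ge c_1\}$. On $U\times S^1$, with $\varphi$ the angular coordinate on $S^1$, let $$g_\epsilon=\frac{1}{V_\epsilon}(d\varphi+\alpha)^2+V_\epsilon\,(dx^2+dy^2+dz^2),$$ considered on the open subset $W$ of $U\times S^1$ where $V_\epsilon\ne0$ and $\rho>0$. Let $$z_1=\prod_{j=1}^n\bigl(r_j-(z-c_j)\bigr)^{1/2}\,e^{-\frac{\epsilon}{2}z+\sqrt{-1}\,\varphi},\qquad z_2=x+\sqrt{-1}\,y,$$ and define $\beta_1=z_1$, $\alpha_1=z_2/z_1$ (so $z_1=\beta_1$, $z_2=\alpha_1\beta_1$). Set $S=\sum_{j=1}^n\frac{r_j+z-c_j}{r_j}$. Then on $W$, $$\begin{aligned}g_\epsilon=&\Bigl[V_\epsilon\rho^2+\frac{S^2}{4V_\epsilon}\Bigr]\frac{d\alpha_1}{\alpha_1}\frac{d\bar\alpha_1}{\bar\alpha_1}+\Bigl[V_\epsilon\rho^2-\frac{S}{2V_\epsilon}+\frac{S^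2}{4V_\epsilon}\Bigr]\Bigl(\frac{d\alpha_1}{\alpha_1}\frac{d\bar\beta_1}{\bar\beta_1}+\frac{d\beta_1}{\beta_1}\frac{d\bar\alpha_1}{\bar\alpha_1}\Bigr)\\&+\Bigl[\frac{1}{V_\epsilon}+V_\epsilon\rho^2-\frac{S}{V_\epsilon}+\frac{S^2}{4V_\epsilon}\Bigr]\frac{d\beta_1}{\beta_1}\frac{d\bar\beta_1}{\bar\beta_1}.\end{aligned}$$
   Context: For $\epsilon>0$, $g_\epsilon$ is the (toric) multi-Taub-NUT metric; for $\epsilon=0$ it is the Gibbons–Hawking metric. The functions $z_1,z_2$ (hence $\alpha_1,\beta_1$) are holomorphic for the complex structure whose $(1,0)$-forms are spanned by $dx+\sqrt{-1}\,dy$ and $(d\varphi+\alpha)+\sqrt{-1}\,V_\epsilon\,dz$. A product $ab$ of two (complex) $1$-forms denotes the symmetric product $\tfrac12(a\otimes b+b\otimes a)$, so that e.g. $(dx+\sqrt{-1}dy)(dx-\sqrt{-1}dy)=dx^2+dy^2$; $dx^2$ means $dx\,dx$. *)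

(* Local coordinates (x,y,z,phi) on U x S^1,
   with phi a real (local) lift of the angular coordinate on S^1. *)
From Stdlib Require Import Reals.
From Coquelicot Require Import Coquelicot.
Open Scope R_scope.

Fixpoint sumR (n : nat) (f : nat -> R) : R :=
  match n with O => 0 | S m => sumR m f + f m end.
Fixpoint prodR (n : nat) (f : nat -> R) : R :=
  match n with O => 1 | S m => prodR m f * f m end.

Definition P4 := (R * R * R * R)%type.

Definition rho (x y : R) : R := sqrt (x ^ 2 + y ^ 2).
Definition rj (c : nat -> R) (j : nat) (x y z : R) : R :=
  sqrt (x ^ 2 + y ^ 2 + (z - c j) ^ 2).

Definition Veps (n : nat) (c : nat -> R) (eps x y z : R) : R :=
  eps / 2 + 1 / 2 * sumR n (fun j => 1 / rj c j x y z).

Definition alpha_form (n : nat) (c : nat -> R) (x y z vx vy : R) : R :=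
  - (1 / 2) * sumR n (fun j =>
       (x * vy - y * vx) / (rj c j x y z * (rj c j x y z - z + c j))).

Definition g_eps (n : nat) (c : nat -> R) (eps : R) (p v w : P4) : R :=
  let '(x, y, z, _) := p in
  let '(vx, vy, vz, vp) := v in
  let '(wx, wy, wz, wp) := w in
  let V := Veps n c eps x y z in
  / V * ((vp + alpha_form n c x y z vx vy) * (wp + alpha_form n c x y z wx wy))
  + V * (vx * wx + vy * wy + vz * wz).

Definition Ssum (n : nat) (c : nat -> R) (x y z : R) : R :=
  sumR n (fun j => (rj c j x y z + z - c j) / rj c j x y z).

Definition zz1 (n : nat) (c : nat -> R) (eps : R) (p : P4) : C :=
  let '(x, y, z, ph) := p in
  Cmult (RtoC (prodR n (fun j => sqrt (rj c j x y z - (z - c j))) * exp (- (eps / 2) * z)))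
        (cos ph, sin ph).
Definition zz2 (p : P4) : C := let '(x, y, _, _) := p in (x, y).

Definition beta1 n c eps (p : P4) : C := zz1 n c eps p.
Definition alpha1 n c eps (p : P4) : C := Cdiv (zz2 p) (zz1 n c eps p).

Definition dC (F : P4 -> C) (p v : P4) : C :=
  let '(x, y, z, ph) := p in
  let '(vx, vy, vz, vp) := v in
  let G t := F (x + t * vx, y + t * vy, z + t * vz, ph + t * vp) in
  (Derive (fun t => Re (G t)) 0, Derive (fun t => Im (G t)) 0).

Definition dlog (F : P4 -> C) (p v : P4) : C := Cdiv (dC F p v) (F p).

(* symmetric product a b = (a (x) b + b (x) a)/2 of complex 1-forms evaluated on (v,w) *)
Definition symprod (a b : P4 -> C) (v w : P4) : C :=
  Cmult (RtoC (1 / 2)) (Cplus (Cmult (a v) (b w)) (Cmult (b v) (a w))).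

Definition cform (a : P4 -> C) : P4 -> C := fun v => Cconj (a v).

From Stdlib Require Import Reals Lra Psatz.
From Coquelicot Require Import Coquelicot.
Open Scope R_scope.

(* With u = d log rho and dtheta the angular form of (x, y), the logarithmic
   differentials are explicit on W:
     d beta1 / beta1 = (S/2) u - V dz + i dphi,
   because d log sqrt (r_j - (z - c_j)) = ((r_j + z - c_j)/r_j u - dz/r_j) / 2
   (use rho^2 = (r_j - (z - c_j)) (r_j + (z - c_j))), and
     d alpha1 / alpha1 = dz2 / z2 - d beta1 / beta1 = u + i dtheta - d beta1 / beta1.
   The same factorisation gives alpha = -(S/2) dtheta.  Since
   dx^2 + dy^2 = rho^2 (u^2 + dtheta^2), both sides of the identity are quadratic
   forms in (u, dz, dtheta, dphi), and comparing them is a field identity. *)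

Lemma sumR_ext n f g : (forall j, (j < n)%nat -> f j = g j) -> sumR n f = sumR n g.
Proof. induction n as [|n IH]; simpl; intros H; [reflexivity|]. rewrite IH, H; auto. Qed.

Lemma sumR_plus n f g : sumR n (fun j => f j + g j) = sumR n f + sumR n g.
Proof. induction n as [|n IH]; simpl; [ring|]. rewrite IH; ring. Qed.

Lemma sumR_scal n a f : sumR n (fun j => a * f j) = a * sumR n f.
Proof. induction n as [|n IH]; simpl; [ring|]. rewrite IH; ring. Qed.

Lemma prodR_ext n f g : (forall j, (j < n)%nat -> f j = g j) -> prodR n f = prodR n g.
Proof. induction n as [|n IH]; simpl; intros H; [reflexivity|]. rewrite IH, H; auto. Qed.

Lemma prodR_pos n f : (forall j, (j < n)%nat -> 0 < f j) -> 0 < prodR n f.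
Proof.
  induction n as [|n IH]; simpl; intros H; [lra|].
  apply Rmult_lt_0_compat; [apply IH | apply H]; auto.
Qed.

Lemma is_derive_val (f : R -> R) (x l l' : R) :
  is_derive f x l -> l = l' -> is_derive f x l'.
Proof. now intros H <-. Qed.

(* Coquelicot states these rules with the abstract [plus], [minus], [opp] and
   [mult], which do not unify with [Rplus] etc. under a binder. *)
Lemma is_derive_Rplus (f g : R -> R) x df dg :
  is_derive f x df -> is_derive g x dg -> is_derive (fun t => f t + g t) x (df + dg).
Proof. intros Hf Hg; exact (is_derive_plus f g x df dg Hf Hg). Qed.

Lemma is_derive_Rminus (f g : R -> R) x df dg :
  is_derive f x df -> is_derive g x dg -> is_derive (fun t => f t - g t) x (df - dg).
Proof. intros Hf Hg; exact (is_derive_minus f g x df dg Hf Hg). Qed.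

Lemma is_derive_Ropp (f : R -> R) x df :
  is_derive f x df -> is_derive (fun t => - f t) x (- df).
Proof. intros Hf; exact (is_derive_opp f x df Hf). Qed.

Lemma is_derive_Rmult (f g : R -> R) x df dg :
  is_derive f x df -> is_derive g x dg ->
  is_derive (fun t => f t * g t) x (df * g x + f x * dg).
Proof. intros Hf Hg; apply (is_derive_mult f g); [exact Hf | exact Hg | exact Rmult_comm]. Qed.

Lemma is_derive_prodR (f : nat -> R -> R) (df : nat -> R) m t :
  (forall j, (j < m)%nat -> is_derive (f j) t (df j)) ->
  (forall j, (j < m)%nat -> f j t <> 0) ->
  is_derive (fun s => prodR m (fun j => f j s)) t
    (prodR m (fun j => f j t) * sumR m (fun j => df j / f j t)).
Proof.
  induction m as [|m IH]; simpl; intros Hd Hn.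
  - auto_derive; auto; ring.
  - eapply is_derive_val.
    + apply is_derive_Rmult; [apply IH | apply Hd]; auto.
    + cbv beta; field; auto.
Qed.

Definition is_dC (F : P4 -> C) (p v : P4) (d : C) : Prop :=
  let '(x, y, z, ph) := p in
  let '(vx, vy, vz, vp) := v in
  let G t := F (x + t * vx, y + t * vy, z + t * vz, ph + t * vp) in
  is_derive (fun t => Re (G t)) 0 (Re d) /\ is_derive (fun t => Im (G t)) 0 (Im d).

Lemma is_dC_val F p v d d' : is_dC F p v d -> d = d' -> is_dC F p v d'.
Proof. now intros H <-. Qed.

Lemma is_dC_unique F p v d : is_dC F p v d -> dC F p v = d.
Proof.
  destruct p as [[[x y] z] ph], v as [[[vx vy] vz] vp], d as [d1 d2].
  intros [H1 H2]. unfold dC. f_equal; apply is_derive_unique; assumption.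
Qed.

Lemma is_dC_RtoC (m : P4 -> R) x y z ph vx vy vz vp dm :
  is_derive (fun t => m (x + t * vx, y + t * vy, z + t * vz, ph + t * vp)) 0 dm ->
  is_dC (fun q => RtoC (m q)) (x, y, z, ph) (vx, vy, vz, vp) (RtoC dm).
Proof.
  intros Hm; unfold is_dC, Re, Im, RtoC; cbn [fst snd].
  split; [exact Hm | auto_derive; auto].
Qed.

Lemma is_dC_mult F G p v dF dG :
  is_dC F p v dF -> is_dC G p v dG ->
  is_dC (fun q => Cmult (F q) (G q)) p v (Cplus (Cmult dF (G p)) (Cmult (F p) dG)).
Proof.
  destruct p as [[[x y] z] ph], v as [[[vx vy] vz] vp].
  unfold is_dC; cbn [Re Im Cmult Cplus fst snd]. intros [HF1 HF2] [HG1 HG2].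
  split; eapply is_derive_val.
  - apply is_derive_Rminus; apply is_derive_Rmult; eassumption.
  - unfold Re, Im; simpl; rewrite !Rmult_0_l, !Rplus_0_r; ring.
  - apply is_derive_Rplus; apply is_derive_Rmult; eassumption.
  - unfold Re, Im; simpl; rewrite !Rmult_0_l, !Rplus_0_r; ring.
Qed.

Lemma is_dC_inv H p v dH :
  is_dC H p v dH -> H p <> RtoC 0 ->
  is_dC (fun q => Cinv (H q)) p v (Copp (Cdiv dH (Cmult (H p) (H p)))).
Proof.
  destruct p as [[[x y] z] ph], v as [[[vx vy] vz] vp].
  unfold is_dC; cbn [Re Im Cinv fst snd]. intros [H1 H2] Hn.
  assert (HN : fst (H (x, y, z, ph)) ^ 2 + snd (H (x, y, z, ph)) ^ 2 <> 0).
  { intro E. apply Hn. destruct (H (x, y, z, ph)) as [a b]; simpl in E.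
    apply injective_projections; simpl; nra. }
  assert (HN2 : (fst (H (x, y, z, ph)) ^ 2 + snd (H (x, y, z, ph)) ^ 2) ^ 2 <> 0)
    by now apply pow_nonzero.
  split; eapply is_derive_val.
  1, 3: apply is_derive_div;
    [ first [exact H1 | apply is_derive_Ropp, H2]
    | apply is_derive_Rplus; apply is_derive_pow; eassumption
    | rewrite !Rmult_0_l, !Rplus_0_r; exact HN ].
  all: cbv beta; rewrite !Rmult_0_l, !Rplus_0_r;
    destruct dH as [d1 d2], (H (x, y, z, ph)) as [a b]; cbn [fst snd] in HN, HN2 |- *;
    unfold Cdiv, Cinv, Cmult, Copp, Re, Im; cbn [fst snd INR pred];
    field; split; [ replace ((a * a - b * b) ^ 2 + (a * b + b * a) ^ 2)
                   with ((a ^ 2 + b ^ 2) ^ 2) by ring | ]; assumption.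
Qed.

Lemma dlog_div G H p v dG dH :
  is_dC G p v dG -> is_dC H p v dH -> G p <> RtoC 0 -> H p <> RtoC 0 ->
  dlog (fun q => Cdiv (G q) (H q)) p v = Cminus (dlog G p v) (dlog H p v).
Proof.
  intros HG HH G0 H0. unfold dlog.
  rewrite (is_dC_unique (fun q => Cdiv (G q) (H q)) p v _
             (is_dC_mult _ _ _ _ _ _ HG (is_dC_inv _ _ _ _ HH H0))),
    (is_dC_unique _ _ _ _ HG), (is_dC_unique _ _ _ _ HH).
  field; auto.
Qed.

Lemma dlog_of_is_dC F p v L :
  is_dC F p v (Cmult (F p) L) -> F p <> RtoC 0 -> dlog F p v = L.
Proof. intros HF H0. unfold dlog. rewrite (is_dC_unique _ _ _ _ HF). field; exact H0. Qed.

Definition dlog_rho (x y vx vy : R) : R := (x * vx + y * vy) / (x ^ 2 + y ^ 2).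
Definition dtheta (x y vx vy : R) : R := (x * vy - y * vx) / (x ^ 2 + y ^ 2).

Lemma sqrt_add_sq_facts s a : 0 < s ->
  let r := sqrt (s + a ^ 2) in 0 < r - a /\ 0 < r + a /\ s = (r - a) * (r + a).
Proof.
  intros Hs r.
  assert (Hr2 : r * r = s + a ^ 2) by (apply sqrt_sqrt; nra).
  assert (Hr0 : 0 <= r) by apply sqrt_pos.
  clearbody r. repeat split; nra.
Qed.

Lemma rj_facts c j x y z : 0 < x ^ 2 + y ^ 2 ->
  0 < rj c j x y z - (z - c j) /\ 0 < rj c j x y z + (z - c j)
  /\ x ^ 2 + y ^ 2 = (rj c j x y z - (z - c j)) * (rj c j x y z + (z - c j)).
Proof. exact (sqrt_add_sq_facts _ (z - c j)). Qed.

Lemma alpha_form_eq n c x y z vx vy : 0 < x ^ 2 + y ^ 2 ->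
  alpha_form n c x y z vx vy = - (Ssum n c x y z / 2) * dtheta x y vx vy.
Proof.
  intros Hs. unfold alpha_form, Ssum.
  rewrite (sumR_ext n _ (fun j => dtheta x y vx vy * ((rj c j x y z + z - c j) / rj c j x y z))).
  - rewrite sumR_scal. field.
  - intros j _. destruct (rj_facts c j x y z Hs) as [Hm [Hp E]].
    unfold dtheta. rewrite E. field. lra.
Qed.

Lemma is_derive_sqrt_rj_sub c j x y z vx vy vz : 0 < x ^ 2 + y ^ 2 ->
  is_derive (fun t => sqrt (rj c j (x + t * vx) (y + t * vy) (z + t * vz) - (z + t * vz - c j))) 0
    (sqrt (rj c j x y z - (z - c j)) / 2
     * ((rj c j x y z + z - c j) / rj c j x y z * dlog_rho x y vx vy - vz / rj c j x y z)).
Proof.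
  intros Hs. destruct (rj_facts c j x y z Hs) as [Hm [Hp E]].
  set (r := rj c j x y z) in *.
  assert (Hinner : is_derive (fun t => rj c j (x + t * vx) (y + t * vy) (z + t * vz)
                                       - (z + t * vz - c j)) 0
                     ((x * vx + y * vy + (z - c j) * vz) / r - vz)).
  { unfold r, rj in *. auto_derive.
    - rewrite !Rmult_0_l, !Rplus_0_r. nra.
    - rewrite !Rmult_0_l, !Rplus_0_r.
      replace (x * (x * 1) + y * (y * 1) + (z + - c j) * ((z + - c j) * 1))
        with (x ^ 2 + y ^ 2 + (z - c j) ^ 2) by ring.
      field. lra. }
  eapply is_derive_val.
  - apply is_derive_sqrt; [exact Hinner|]. rewrite !Rmult_0_l, !Rplus_0_r. fold r. lra.
  - cbv beta. rewrite !Rmult_0_l, !Rplus_0_r. fold r.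
    assert (Hsq : sqrt (r - (z - c j)) * sqrt (r - (z - c j)) = r - (z - c j))
      by (apply sqrt_sqrt; lra).
    assert (Hs0 : 0 < sqrt (r - (z - c j))) by (apply sqrt_lt_R0; lra).
    unfold dlog_rho. rewrite E.
    set (s := sqrt (r - (z - c j))) in *. clearbody s.
    replace r with (s * s + (z - c j)) by lra.
    field. split; nra.
Qed.

(* On a point given by its coordinates, [zz1 n c eps p] reduces to
   [Cmult (RtoC (z1_modulus n c eps p)) (phase p)]. *)
Definition z1_modulus (n : nat) (c : nat -> R) (eps : R) (p : P4) : R :=
  let '(x, y, z, _) := p in
  prodR n (fun j => sqrt (rj c j x y z - (z - c j))) * exp (- (eps / 2) * z).

Definition phase (p : P4) : C := let '(_, _, _, ph) := p in (cos ph, sin ph).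

Lemma z1_modulus_pos n c eps x y z ph : 0 < x ^ 2 + y ^ 2 ->
  0 < z1_modulus n c eps (x, y, z, ph).
Proof.
  intros Hs. apply Rmult_lt_0_compat; [|apply exp_pos].
  apply prodR_pos. intros j _. apply sqrt_lt_R0, (rj_facts c j x y z Hs).
Qed.

Lemma is_derive_z1_modulus n c eps x y z ph vx vy vz vp : 0 < x ^ 2 + y ^ 2 ->
  is_derive (fun t => z1_modulus n c eps (x + t * vx, y + t * vy, z + t * vz, ph + t * vp)) 0
    (z1_modulus n c eps (x, y, z, ph)
     * (Ssum n c x y z / 2 * dlog_rho x y vx vy - Veps n c eps x y z * vz)).
Proof.
  intros Hs.
  set (f j t := sqrt (rj c j (x + t * vx) (y + t * vy) (z + t * vz) - (z + t * vz - c j))).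
  assert (Hf0 : forall j, f j 0 = sqrt (rj c j x y z - (z - c j)))
    by (intros j; unfold f; rewrite !Rmult_0_l, !Rplus_0_r; reflexivity).
  assert (Hpos : forall j, 0 < f j 0)
    by (intros j; rewrite Hf0; apply sqrt_lt_R0, (rj_facts c j x y z Hs)).
  eapply is_derive_val.
  - apply (is_derive_Rmult (fun t => prodR n (fun j => f j t))).
    + apply is_derive_prodR.
      * intros j _. apply is_derive_sqrt_rj_sub, Hs.
      * intros j _. apply Rgt_not_eq, Hpos.
    + auto_derive; auto.
  - cbv beta. rewrite (prodR_ext n _ _ (fun j _ => Hf0 j)).
    rewrite (sumR_ext n _ (fun j => / 2 * dlog_rho x y vx vy * ((rj c j x y z + z - c j) / rj c j x y z)
                                  + (- vz / 2) * (1 / rj c j x y z))).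
    2: { intros j _. specialize (Hpos j). rewrite Hf0 in Hpos |- *.
         destruct (rj_facts c j x y z Hs) as [Hm [Hp _]]. field. lra. }
    rewrite sumR_plus, !sumR_scal. unfold z1_modulus, Ssum, Veps.
    rewrite !Rmult_0_l, !Rplus_0_r. field.
Qed.

Lemma is_dC_phase x y z ph vx vy vz vp :
  is_dC phase (x, y, z, ph) (vx, vy, vz, vp) (Cmult (phase (x, y, z, ph)) (0, vp)).
Proof.
  unfold is_dC, phase, Re, Im; cbn [fst snd Cmult].
  split; auto_derive; auto; rewrite Rmult_0_l, Rplus_0_r; ring.
Qed.

Lemma zz1_neq0 n c eps x y z ph : 0 < x ^ 2 + y ^ 2 -> zz1 n c eps (x, y, z, ph) <> RtoC 0.
Proof.
  intros Hs E. pose proof (z1_modulus_pos n c eps x y z ph Hs) as Hm.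
  change (zz1 n c eps (x, y, z, ph))
    with (Cmult (RtoC (z1_modulus n c eps (x, y, z, ph))) (cos ph, sin ph)) in E.
  set (m := z1_modulus n c eps (x, y, z, ph)) in *.
  pose proof (f_equal fst E) as E1. pose proof (f_equal snd E) as E2.
  cbn [fst snd Cmult RtoC] in E1, E2.
  assert (Hcs : m * m = (m * cos ph) ^ 2 + (m * sin ph) ^ 2).
  { pose proof (sin2_cos2 ph) as Hcs. unfold Rsqr in Hcs. nra. }
  nra.
Qed.

Lemma is_dC_zz1 n c eps x y z ph vx vy vz vp : 0 < x ^ 2 + y ^ 2 ->
  is_dC (zz1 n c eps) (x, y, z, ph) (vx, vy, vz, vp)
    (Cmult (zz1 n c eps (x, y, z, ph))
       (Ssum n c x y z / 2 * dlog_rho x y vx vy - Veps n c eps x y z * vz, vp)).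
Proof.
  intros Hs. eapply is_dC_val.
  - exact (is_dC_mult _ _ _ _ _ _
      (is_dC_RtoC (z1_modulus n c eps) x y z ph vx vy vz vp _
         (is_derive_z1_modulus n c eps x y z ph vx vy vz vp Hs))
      (is_dC_phase x y z ph vx vy vz vp)).
  - apply injective_projections; simpl; ring.
Qed.

Lemma dlog_beta1 n c eps x y z ph vx vy vz vp : 0 < x ^ 2 + y ^ 2 ->
  dlog (beta1 n c eps) (x, y, z, ph) (vx, vy, vz, vp)
  = (Ssum n c x y z / 2 * dlog_rho x y vx vy - Veps n c eps x y z * vz, vp).
Proof.
  intros Hs. apply dlog_of_is_dC; [apply is_dC_zz1 | apply zz1_neq0]; exact Hs.
Qed.

Lemma is_dC_zz2 x y z ph vx vy vz vp :
  is_dC zz2 (x, y, z, ph) (vx, vy, vz, vp) (vx, vy).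
Proof. unfold is_dC, zz2, Re, Im; cbn [fst snd]; split; auto_derive; auto; ring. Qed.

Lemma zz2_neq0 x y z ph : 0 < x ^ 2 + y ^ 2 -> zz2 (x, y, z, ph) <> RtoC 0.
Proof.
  intros Hs E. pose proof (f_equal fst E). pose proof (f_equal snd E). simpl in *. nra.
Qed.

Lemma dlog_zz2 x y z ph vx vy vz vp : 0 < x ^ 2 + y ^ 2 ->
  dlog zz2 (x, y, z, ph) (vx, vy, vz, vp) = (dlog_rho x y vx vy, dtheta x y vx vy).
Proof.
  intros Hs. apply dlog_of_is_dC; [eapply is_dC_val; [apply is_dC_zz2|] | apply zz2_neq0, Hs].
  unfold zz2, dlog_rho, dtheta, Cmult.
  apply injective_projections; cbn [fst snd]; field; lra.
Qed.

Lemma dlog_alpha1 n c eps x y z ph vx vy vz vp : 0 < x ^ 2 + y ^ 2 ->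
  dlog (alpha1 n c eps) (x, y, z, ph) (vx, vy, vz, vp)
  = (dlog_rho x y vx vy - (Ssum n c x y z / 2 * dlog_rho x y vx vy - Veps n c eps x y z * vz),
     dtheta x y vx vy - vp).
Proof.
  intros Hs. unfold alpha1.
  rewrite (dlog_div _ _ _ _ _ _ (is_dC_zz2 x y z ph vx vy vz vp)
             (is_dC_zz1 n c eps x y z ph vx vy vz vp Hs) (zz2_neq0 x y z ph Hs)
             (zz1_neq0 n c eps x y z ph Hs)).
  rewrite dlog_zz2, (dlog_beta1 n c eps) by exact Hs.
  reflexivity.
Qed.

Theorem mainTheorem2 (n : nat) (c : nat -> R) (eps : R) :
  (1 <= n)%nat ->
  (forall i j : nat, (i < j)%nat -> (j < n)%nat -> c i < c j) ->
  forall x y z ph : R,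
  let p : P4 := (x, y, z, ph) in
  0 < rho x y ->
  Veps n c eps x y z <> 0 ->
  forall v w : P4,
  let V := Veps n c eps x y z in
  let S := Ssum n c x y z in
  let A := dlog (alpha1 n c eps) p in
  let B := dlog (beta1 n c eps) p in
  RtoC (g_eps n c eps p v w) =
  Cplus (Cplus
    (Cmult (RtoC (V * rho x y ^ 2 + S ^ 2 / (4 * V))) (symprod A (cform A) v w))
    (Cmult (RtoC (V * rho x y ^ 2 - S / (2 * V) + S ^ 2 / (4 * V)))
           (Cplus (symprod A (cform B) v w) (symprod B (cform A) v w))))
    (Cmult (RtoC (1 / V + V * rho x y ^ 2 - S / V + S ^ 2 / (4 * V)))
           (symprod B (cform B) v w)).
Proof.
  intros _ _ x y z ph p Hrho HV [[[vx vy] vz] vp] [[[wx wy] wz] wp] V S A B.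
  assert (Hs : 0 < x ^ 2 + y ^ 2)
    by (apply sqrt_lt_0_alt; rewrite sqrt_0; exact Hrho).
  unfold symprod, cform, A, B, p.
  rewrite !dlog_alpha1, !dlog_beta1 by exact Hs.
  unfold g_eps; rewrite !alpha_form_eq by exact Hs.
  unfold rho; rewrite pow2_sqrt by lra.
  fold V S. unfold dlog_rho, dtheta.
  apply injective_projections; cbn [fst snd Cmult Cplus Cconj RtoC];
    field; repeat split; try lra; exact HV.
Qed.
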